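(* Let $K\subset\mathbb R^d$ be compact, $\varepsilon>0$, $r>0$ and $\mu\in\mathcal F(K)$. There exists $\delta>0$ such that every $\nu\in\mathcal P(K)$ with $L(\mu,\nu)<\delta$ satisfies $I_\nu(r,1)\le\log2+(1-\varepsilon)I_\mu(2r,1)$.
   Context: $\mathcal P(K)$ is the set of Borel probability measures on $K$, $\mathcal F(K)$ the subset of those with finite support. $L$ is the Fortet–Mourier metric $L(\mu,\nu)=\sup_f|\int fd\mu-\int fd\nu|$ over $f:K\to\mathbb R$ with $|f|\le1$ and Lipschitz constant $\le1$. $B(x,r)$ is the open ball and $I_\mu(r,1)=\int_K\log\mu(B(x,r))\,d\mu(x)$. *)

From HB Require Import structures.
From mathcomp Require Import all_boot all_order all_algebra.
From mathcomp Require Import all_classical all_reals all_analysis.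
Set Implicit Arguments. Unset Strict Implicit. Unset Printing Implicit Defensive.
Import Order.TTheory GRing.Theory Num.Theory.
Import numFieldNormedType.Exports.
Local Open Scope classical_set_scope.
Local Open Scope ring_scope.

Definition edist (R : realType) (d : nat) (x y : 'rV[R]_d) : R :=
  Num.sqrt (\sum_(i < d) (x ord0 i - y ord0 i) ^+ 2).

Definition eball (R : realType) (d : nat) (x : 'rV[R]_d) (r : R) : set 'rV[R]_d :=
  [set y | edist x y < r].

(* R^d with its Borel sigma-algebra (generated by the open sets; the
   library topology on 'rV[R]_d is the product topology, which coincides
   with the Euclidean one). *)
Definition Rd (R : realType) (d : nat) := g_sigma_algebraType (@open 'rV[R]_d).

(* mu is (the extension by zero of) a Borel probability measure on K *)
Definition prob_on (R : realType) (d : nat) (K : set 'rV[R]_d)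
  (mu : probability (Rd R d) R) : Prop :=
  mu (~` K) = 0%E.

Definition finite_supp (R : realType) (d : nat) (mu : probability (Rd R d) R) : Prop :=
  exists S : set 'rV[R]_d, finite_set S /\ mu (~` S) = 0%E.

Definition FM_test (R : realType) (d : nat) (K : set 'rV[R]_d) (f : 'rV[R]_d -> R) : Prop :=
  (forall x, K x -> `|f x| <= 1) /\
  (forall x y, K x -> K y -> `|f x - f y| <= edist x y).

Definition FM (R : realType) (d : nat) (K : set 'rV[R]_d)
  (mu nu : probability (Rd R d) R) : \bar R :=
  ereal_sup [set (`| Rintegral mu K f - Rintegral nu K f |)%:E
            | f in [set f | FM_test K f]].

Definition elog (R : realType) (v : \bar R) : \bar R :=
  if v == 0%E then -oo%E else if v == +oo%E then +oo%E else (ln (fine v))%:E.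

Definition Ient (R : realType) (d : nat) (K : set 'rV[R]_d)
  (mu : probability (Rd R d) R) (r : R) : \bar R :=
  (\int[mu]_(x in K) elog (mu (eball x r)))%E.

(* Let [a] range over the finitely many atoms of [mu], with [m a = mu {a}] and
   [M a = mu (B(a, 2r))], so that [I_mu(2r, 1) >= sum_a m a log M a].  Choose
   [rho <= min(1, r/2)] so small that the balls [B(a, rho)] are disjoint.
   Testing [L(mu, nu)] against the 1-Lipschitz tents [x |-> (rho - |x - a|)^+]
   and [x |-> min(rho, (2r - |x - a|)^+)] shows that, once [L(mu, nu)] is small,
   [nu (B(a, rho)) >= (1 - eps) m a] and [nu (B(a, r + rho)) <= 2 M a].  Every
   [x] in [B(a, rho)] has [B(x, r)] inside [B(a, r + rho)], so [log nu (B(x, r))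
   <= log (2 M a)] there, and integrating over the disjoint balls gives
   [I_nu(r, 1) <= log 2 + (1 - eps) sum_a m a log M a]. *)

From HB Require Import structures.
From mathcomp Require Import all_boot all_order all_algebra.
From mathcomp Require Import all_classical all_reals all_analysis measurable_realfun.
From mathcomp Require Import ring lra.
Set Implicit Arguments. Unset Strict Implicit.
Import Order.TTheory GRing.Theory Num.Theory.
Import numFieldNormedType.Exports.
Local Open Scope classical_set_scope.
Local Open Scope ring_scope.

Lemma cauchy_schwarz_sum (R : realFieldType) (n : nat) (u v : 'I_n -> R) :
  (\sum_i u i * v i) ^+ 2 <= (\sum_i u i ^+ 2) * (\sum_i v i ^+ 2).
Proof.
have lagrange : \sum_i \sum_j (u i * v j - u j * v i) ^+ 2 =
    2 * ((\sum_i u i ^+ 2) * (\sum_i v i ^+ 2) - (\sum_i u i * v i) ^+ 2).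
  transitivity (\sum_i \sum_j (u i ^+ 2 * v j ^+ 2 + v i ^+ 2 * u j ^+ 2
      - 2 * ((u i * v i) * (u j * v j)))).
    by apply: eq_bigr => i _; apply: eq_bigr => j _; ring.
  under eq_bigr do rewrite sumrB big_split /= -!mulr_sumr.
  rewrite sumrB big_split /= -!mulr_suml -mulr_sumr -mulr_suml.
  rewrite [X in _ + X - _]mulrC expr2; ring.
have : 0 <= \sum_i \sum_j (u i * v j - u j * v i) ^+ 2.
  by apply: sumr_ge0 => i _; apply: sumr_ge0 => j _; exact: sqr_ge0.
rewrite lagrange; lra.
Qed.

Lemma exists_pos_lb_seq (R : realDomainType) (T : eqType) (s : seq T) (F : T -> R) :
  (forall a, a \in s -> 0 < F a) -> exists2 c, 0 < c & forall a, a \in s -> c <= F a.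
Proof.
elim: s => [|x s IH] Fpos; first by exists 1.
have [c c0 cle] : exists2 c, 0 < c & forall a, a \in s -> c <= F a.
  by apply: IH => a sa; apply: Fpos; rewrite in_cons sa orbT.
have Fx : 0 < F x by apply: Fpos; rewrite mem_head.
exists (Num.min c (F x)); first by rewrite lt_min c0 Fx.
move=> a; rewrite in_cons => /orP[/eqP->|sa]; first by rewrite ge_min lexx orbT.
by rewrite ge_min cle.
Qed.

Lemma set_seq_cons (T : eqType) (a : T) (s : seq T) : [set` (a :: s)] = [set a] `|` [set` s].
Proof.
apply/seteqP; split => y /=; rewrite in_cons; first by case/orP => [/eqP ->|ys]; [left|right].
by case => [->|ys]; rewrite ?eqxx ?ys ?orbT.
Qed.

Lemma sum_indic_disjoint (T : Type) (I : eqType) (R : numDomainType) (p : seq I)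
    (F : I -> set T) (c : I -> R) (a : I) (x : T) :
  uniq p -> a \in p -> F a x -> {in p, forall b, F b x -> b = a} ->
  \sum_(b <- p) c b * \1_(F b) x = c a.
Proof.
move=> up pa Fax Fx_a; rewrite (bigD1_seq a) //= big1_seq ?addr0 => [|b /andP[ba pb]].
  by rewrite indicE mem_set // mulr1.
rewrite indicE; case: (boolP (x \in F b)) => [/[1!inE] /(Fx_a b pb) eba|]; last by rewrite mulr0.
by rewrite eba eqxx in ba.
Qed.

Lemma fine_between (R : realType) (lo hi : R) (x : \bar R) :
  (lo%:E <= x)%E -> (x <= hi%:E)%E -> lo <= fine x <= hi.
Proof. by case: x => [x| |] //=; rewrite !lee_fin => -> ->. Qed.

Lemma packing_entropy_bound (R : realType) (T : eqType) (p : seq T) (m M w : T -> R)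
    (e : R) :
  (forall a, a \in p -> 0 < M a <= 1) -> (forall a, a \in p -> (1 - e) * m a <= w a) ->
  (forall a, a \in p -> 0 <= w a) -> \sum_(a <- p) w a <= 1 ->
  \sum_(a <- p) Num.min 0 (ln (2 * M a)) * w a
    <= ln 2 + (1 - e) * \sum_(a <- p) m a * ln (M a).
Proof.
move=> M01 mw w0 sumw.
have ln2 : 0 <= ln (2 : R) by apply: ln_ge0; rewrite ler1n.
apply: (@le_trans _ _ (\sum_(a <- p) (ln 2 * w a + (1 - e) * (m a * ln (M a))))).
  rewrite big_seq_cond [X in _ <= X]big_seq_cond; apply: ler_sum => a /andP[pa _].
  have /andP[M0 M1] := M01 a pa; have := mw a pa; have := w0 a pa.
  have lnM_le0 : ln (M a) <= 0 by rewrite ln_le0.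
  have : Num.min 0 (ln (2 * M a)) <= ln 2 + ln (M a) by rewrite ge_min lnM ?posrE // lexx orbT.
  nra.
rewrite big_split /= -mulr_sumr -mulr_sumr lerD2r.
by rewrite -[X in _ <= X]mulr1 ler_wpM2l.
Qed.

Lemma le_scale_nonpos (R : realType) (k k' y : R) (I : \bar R) :
  0 <= k -> k' <= k -> (y%:E <= I)%E -> (I <= 0)%E -> ((k * y)%:E <= k'%:E * I)%E.
Proof.
by move=> k0 kk'; case: I => [b| |] //=; rewrite !lee_fin => yb b0; nra.
Qed.

Section nonneg_integral_comparison.
Local Open Scope ereal_scope.
Context dT (T : measurableType dT) (R : realType).
Variable mu : {measure set T -> \bar R}.
Import HBNNSimple.

(* Unlike [ge0_le_integral], no measurability is required: the integral of a
   nonnegative function is a supremum over the simple functions below it. *)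
Lemma ge0_le_integral_nonmeas (D : set T) (f g : T -> \bar R) :
  (forall x, D x -> 0 <= f x) -> (forall x, D x -> f x <= g x) ->
  \int[mu]_(x in D) f x <= \int[mu]_(x in D) g x.
Proof.
move=> f0 fg.
have g0 x : D x -> 0 <= g x by move=> Dx; exact: le_trans (f0 _ Dx) (fg _ Dx).
rewrite !ge0_integralE //; apply: ereal_sup_le => _ [h hf <-]; exists h => //= x.
apply: le_trans (hf x) _; rewrite /patch; case: ifP => // /[1!inE] Dx.
exact: fg.
Qed.

Lemma ge0_le_integral_off_null (D N : set T) (f g : T -> \bar R) :
  measurable D -> measurable N -> mu N = 0 -> measurable_fun D g ->
  (forall x, D x -> 0 <= f x) -> (forall x, D x -> 0 <= g x) ->
  (forall x, D x -> ~ N x -> f x <= g x) ->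
  \int[mu]_(x in D) f x <= \int[mu]_(x in D) g x.
Proof.
move=> mD mN N0 mg f0 g0 fg.
rewrite [X in X <= _]ge0_integralE //; apply: ge_ereal_sup => _ [h hf <-].
have mgD : measurable_fun setT (g \_ D) by exact/(measurable_restrictT _ _).1.
have gD0 x : 0 <= (g \_ D) x by rewrite /patch; case: ifP => // /[1!inE]; exact: g0.
rewrite -integralT_nnsfun (@ge0_negligible_integral _ _ _ mu setT N) //; last first.
- by move=> x _; rewrite lee_fin; exact: fun_ge0.
- by apply/measurable_EFinP; exact: measurable_funPT.
apply: (@le_trans _ _ (\int[mu]_(x in setT `\` N) (g \_ D) x)).
  apply: ge0_le_integral => //.
  - exact: measurableD.
  - by move=> x _; rewrite lee_fin; exact: fun_ge0.
  - by apply/measurable_EFinP; apply: measurable_funTS; exact: measurable_funPT.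
  - exact: measurable_funTS mgD.
  - move=> x [_ Nx]; apply: le_trans (hf x) _.
    by rewrite /patch; case: ifP => // /[1!inE] Dx; apply: fg.
rewrite [X in _ <= X]integral_mkcond; apply: ge0_subset_integral => //.
exact: measurableD.
Qed.

Lemma integralZ_indic (D A : set T) (k : R) : measurable D -> measurable A ->
  (0 <= k)%R -> \int[mu]_(x in D) (k * \1_A x)%:E = k%:E * mu (A `&` D).
Proof.
move=> mD mA k0.
under eq_integral do rewrite EFinM.
rewrite ge0_integralZl_EFin //; first by rewrite integral_indic.
by apply/measurable_EFinP; exact: measurable_indic.
Qed.

Lemma le0_integralE (D : set T) (g : T -> \bar R) : (forall x, D x -> g x <= 0) ->
  \int[mu]_(x in D) g x = - \int[mu]_(x in D) g^\- x.
Proof.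
move=> g0; rewrite integralE (@integral0_eq _ _ _ mu D g^\+) ?sub0e // => x Dx.
by rewrite funeposE maxEle; case: leP => // gx; have := g0 x Dx; rewrite leNgt gx.
Qed.

End nonneg_integral_comparison.

Section elog.
Variable R : realType.
Local Open Scope ereal_scope.

Lemma elog_EFin (t : R) : (0 < t)%R -> elog t%:E = (ln t)%:E.
Proof. by move=> t0; rewrite /elog eqe gt_eqF. Qed.

Lemma elog_le_ln (v : \bar R) (t : R) : (0 < t)%R -> 0 <= v -> v <= t%:E ->
  elog v <= (ln t)%:E.
Proof.
move=> t0; case: v => [x| |] //=; rewrite !lee_fin => x0 xt.
rewrite /elog eqe; case: ifPn => [_|x_neq0]; first exact: leNye.
by rewrite lee_fin ler_ln ?posrE // lt_neqAle eq_sym x_neq0.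
Qed.

Lemma elog_le0 (v : \bar R) : 0 <= v -> v <= 1 -> elog v <= 0.
Proof. by move=> v0 v1; have := elog_le_ln ltr01 v0 v1; rewrite ln1. Qed.

End elog.

Section borel_Rd.
Variables (R : realType) (d : nat).
Local Notation V := 'rV[R]_d.
Local Notation Rd := (Rd R d).
Implicit Types (x y z : V) (P : probability Rd R).

Lemma edist_ge0 x y : 0 <= edist x y.
Proof. exact: sqrtr_ge0. Qed.

Lemma edistxx x : edist x x = 0.
Proof. by rewrite /edist big1 ?sqrtr0// => i _; rewrite subrr expr0n. Qed.

Lemma edistC x y : edist x y = edist y x.
Proof. by rewrite /edist; congr Num.sqrt; apply: eq_bigr => i _; rewrite -opprB sqrrN. Qed.

Lemma edist_triangle x y z : edist x z <= edist x y + edist y z.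
Proof.
rewrite /edist.
set u := fun i => x ord0 i - y ord0 i; set v := fun i => y ord0 i - z ord0 i.
have -> : \sum_(i < d) (x ord0 i - z ord0 i) ^+ 2 = \sum_i (u i + v i) ^+ 2.
  by apply: eq_bigr => i _; rewrite /u /v; congr (_ ^+ 2); ring.
rewrite -/(\sum_i u i ^+ 2) -/(\sum_i v i ^+ 2).
set A := \sum_i u i ^+ 2; set B := \sum_i v i ^+ 2.
have A0 : 0 <= A by apply: sumr_ge0 => i _; exact: sqr_ge0.
have B0 : 0 <= B by apply: sumr_ge0 => i _; exact: sqr_ge0.
have expand : \sum_i (u i + v i) ^+ 2 = A + B + 2 * \sum_i u i * v i.
  rewrite /A /B -big_split mulr_sumr -big_split /=; apply: eq_bigr => i _; ring.
have cs : \sum_i u i * v i <= Num.sqrt A * Num.sqrt B.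
  apply: le_trans (ler_norm _) _.
  by rewrite -sqrtr_sqr -sqrtrM // ler_sqrt ?mulr_ge0 // cauchy_schwarz_sum.
have sA := sqrtr_ge0 A; have sB := sqrtr_ge0 B.
rewrite -(ger0_norm (addr_ge0 sA sB)) -sqrtr_sqr ler_sqrt ?sqr_ge0 // expand.
rewrite sqrrD !sqr_sqrtr //; lra.
Qed.

Lemma edist_eq0 x y : edist x y = 0 -> x = y.
Proof.
move=> /eqP; rewrite /edist sqrtr_eq0 => le0.
have /psumr_eq0P sq0 : \sum_(i < d) (x ord0 i - y ord0 i) ^+ 2 = 0.
  by apply/eqP; rewrite eq_le le0; apply: sumr_ge0 => i _; exact: sqr_ge0.
apply/matrixP => i j; rewrite (ord1 i).
by move: (sq0 (fun k _ => sqr_ge0 _) j isT) => /eqP; rewrite sqrf_eq0 subr_eq0 => /eqP.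
Qed.

Lemma open_eball x r : open (eball x r).
Proof.
rewrite openE => y; rewrite /eball /= => xy; apply/nbhs_ballP.
set c := r - edist x y; have c0 : 0 < c by rewrite /c subr_gt0.
set n : R := d%:R; have n0 : 0 <= n by rewrite /n ler0n.
set e := c / (n + 1).
have e0 : 0 < e by rewrite /e divr_gt0 // ltr_wpDl.
have ce : c = e * (n + 1) by rewrite /e mulfVK // gt_eqF // ltr_wpDl.
exists e => //= z [_ yz].
change (edist x z < r); apply: le_lt_trans (edist_triangle x y z) _.
rewrite -ltrBrDl -/c.
have sq_le : \sum_(i < d) (y ord0 i - z ord0 i) ^+ 2 <= n * e ^+ 2.
  rewrite (_ : n * e ^+ 2 = \sum_(i < d) e ^+ 2); last first.
    by rewrite sumr_const card_ord mulr_natl.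
  apply: ler_sum => i _; have := yz ord0 i; rewrite /ball /= => yzi.
  rewrite -real_normK ?num_real //; have := normr_ge0 (y ord0 i - z ord0 i); nra.
rewrite /edist -(ger0_norm (ltW c0)) -sqrtr_sqr ltr_sqrt ?exprn_gt0 //.
by apply: le_lt_trans sq_le _; rewrite ce; nra.
Qed.

Lemma open_measurable_Rd (A : set V) : open A -> measurable (A : set Rd).
Proof. exact: (@sub_sigma_algebra _ setT (@open _)). Qed.

Lemma closed_measurable_Rd (A : set V) : closed A -> measurable (A : set Rd).
Proof. by move=> /closed_openC /open_measurable_Rd /measurableC; rewrite setCK. Qed.

Lemma measurable_eball x r : measurable (eball x r : set Rd).
Proof. by apply: open_measurable_Rd; exact: open_eball. Qed.

Lemma measurable_set1_Rd x : measurable ([set x] : set Rd).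
Proof.
apply: closed_measurable_Rd; apply: accessible_closed_set1.
exact/hausdorff_accessible/norm_hausdorff.
Qed.

Lemma compact_measurable_Rd (K : set V) : compact K -> measurable (K : set Rd).
Proof. by move=> /(compact_closed (@norm_hausdorff _ _)) /closed_measurable_Rd. Qed.

Lemma measure_set1_le_eball (mu : {measure set Rd -> \bar R}) x (s : R) :
  0 < s -> (mu [set x] <= mu (eball x s))%E.
Proof.
move=> s0; apply: le_measure; rewrite ?inE; [exact: measurable_set1_Rd | exact: measurable_eball |].
by move=> y ->; rewrite /eball /= edistxx.
Qed.

Lemma fineK_prob P A : measurable (A : set Rd) -> (fine (P A))%:E = P A.
Proof. by move=> mA; rewrite fineK // fin_num_measure. Qed.

Lemma fine_set1_le_eball P x (s : R) : 0 < s -> fine (P [set x]) <= fine (P (eball x s)).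
Proof.
move=> s0; rewrite -lee_fin (fineK_prob P (measurable_set1_Rd x)).
by rewrite (fineK_prob P (measurable_eball x s)); exact: measure_set1_le_eball.
Qed.

Lemma fine_prob_ge0 P (A : set V) : 0 <= fine (P A).
Proof. exact/fine_ge0/measure_ge0. Qed.

Lemma fine_prob_le1 P (A : set V) : measurable (A : set Rd) -> fine (P A) <= 1.
Proof. by move=> mA; rewrite -lee_fin fineK_prob // probability_le1. Qed.

Lemma measurable_set_seq (s : seq V) : measurable ([set` s] : set Rd).
Proof.
elim: s => [|a s IH]; first by rewrite set_nil.
(* Stated at type [set Rd]: a rewrite with [set_seq_cons] at [set V] would leave
   terms that later rewrites under the measure fail to match. *)
have -> : ([set` (a :: s)] : set Rd) = [set a] `|` [set` s] := set_seq_cons a s.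
by apply: measurableU => //; exact: measurable_set1_Rd.
Qed.

Lemma measure_set_seq0 (mu : {measure set Rd -> \bar R}) (s : seq V) :
  (forall a, a \in s -> mu [set a] = 0%E) -> mu [set` s] = 0%E.
Proof.
elim: s => [|a s IH] null; first by rewrite set_nil measure0.
have -> : ([set` (a :: s)] : set Rd) = [set a] `|` [set` s] := set_seq_cons a s.
apply/eqP; rewrite eq_le measure_ge0 andbT.
apply: (@le_trans _ _ (mu [set a] + mu [set` s])%E).
  exact: measureU2 (measurable_set1_Rd _) (measurable_set_seq _).
by rewrite null ?mem_head // IH ?adde0 // => b sb; apply: null; rewrite in_cons sb orbT.
Qed.

Lemma finite_supp_atoms (mu : probability Rd R) : finite_supp mu ->
  exists p : seq V, [/\ uniq p, forall a, a \in p -> (0 < mu [set a])%E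
                      & mu (~` [set` p]) = 0%E].
Proof.
move=> [S [/finite_seqP[s ->] null_out]].
set p := [seq a <- undup s | (0 < mu [set a])%E].
exists p; split; first exact/filter_uniq/undup_uniq.
  by move=> a; rewrite mem_filter => /andP[].
set z := [seq a <- s | mu [set a] == 0%E].
have out_p : ~` [set` p] `<=` ~` [set` s] `|` [set` z].
  move=> y /= py; have [sy|] := boolP (y \in s); last by left.
  right; rewrite mem_filter sy andbT.
  move: py; rewrite mem_filter mem_undup sy andbT.
  by rewrite lt_neqAle measure_ge0 andbT eq_sym => /negP/negPn.
have m_out : measurable (~` [set` s] : set Rd) by apply: measurableC; exact: measurable_set_seq.
apply/eqP; rewrite eq_le measure_ge0 andbT.
apply: le_trans (le_measure _ _ _ out_p) _; rewrite ?inE //.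
- by apply: measurableC; exact: measurable_set_seq.
- by apply: measurableU => //; exact: measurable_set_seq.
apply: (@le_trans _ _ (mu (~` [set` s]) + mu [set` z])%E).
  exact: measureU2 m_out (measurable_set_seq _).
rewrite null_out measure_set_seq0 ?adde0 // => a.
by rewrite mem_filter => /andP[/eqP].
Qed.

Lemma exists_separating_radius (s : seq V) (ub : R) : 0 < ub ->
  exists2 rho, 0 < rho <= ub &
    {in s &, forall a b x, eball a rho x -> eball b rho x -> a = b}.
Proof.
move=> ub0.
pose F (ab : V * V) := if ab.1 == ab.2 then 1 else edist ab.1 ab.2.
have [D D0 Dle] : exists2 D, 0 < D & forall ab, ab \in [seq (a, b) | a <- s, b <- s] -> D <= F ab.
  apply: exists_pos_lb_seq => ab _; rewrite /F; case: eqP => [_|nab]; first exact: ltr01.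
  by rewrite lt_neqAle edist_ge0 andbT; apply/eqP => /esym/edist_eq0.
exists (Num.min ub (D / 2)); first by rewrite lt_min ub0 divr_gt0 //= ge_min lexx.
move=> a b sa sb x; rewrite /eball /= !lt_min => /andP[_ ax] /andP[_ bx].
have [//|nab] := eqVneq a b; exfalso.
have := Dle (a, b) (allpairs_f pair sa sb); rewrite /F /= (negbTE nab) => Dab.
by have := edist_triangle a x b; rewrite (edistC x b); lra.
Qed.

Lemma sum_disjoint_balls_le1 (nu : probability Rd R) (p : seq V) (rho : R) : uniq p ->
  {in p &, forall a b x, eball a rho x -> eball b rho x -> a = b} ->
  \sum_(a <- p) fine (nu (eball a rho)) <= 1.
Proof.
move=> up disj.
have finp : finite_set [set` p] by apply/finite_seqP; exists p.
have mB a : [set` p] a -> measurable (eball a rho : set Rd).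
  by move=> _; exact: measurable_eball.
have trivB : trivIset [set` p] (fun a => eball a rho).
  by move=> a b /= pa pb [x [ax bx]]; exact: disj ax bx.
have := probability_le1 nu (fin_bigcup_measurable finp mB).
rewrite measure_fin_bigcup // -fsbig_seq // -lee_fin -sumEFin.
suff -> : \sum_(a <- p) (fine (nu (eball a rho)))%:E = \sum_(a <- p) nu (eball a rho) by [].
by apply: eq_bigr => a _; exact: fineK_prob (measurable_eball a rho).
Qed.

End borel_Rd.

Section on_K.
Variables (R : realType) (d : nat) (K : set 'rV[R]_d).
Hypothesis mK : measurable (K : set (Rd R d)).
Local Notation V := 'rV[R]_d.
Local Notation Rd := (Rd R d).
Implicit Types (P Q mu nu : probability Rd R) (A B : set V) (h : V -> R) (p : seq V).

Lemma prob_on_setIK P A : prob_on K P -> measurable (A : set Rd) -> P (A `&` K) = P A.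
Proof.
move=> PK mA.
have mAK : measurable (A `&` K : set Rd) by exact: measurableI.
have sub : (P (A `&` K) <= P A)%E by rewrite le_measure ?inE //; exact: subIsetl.
apply/eqP; rewrite eq_le sub /=.
have mAC : measurable (A `&` ~` K : set Rd) by apply: measurableI => //; exact: measurableC.
have nullAC : P (A `&` ~` K) = 0%E.
  apply/eqP; rewrite eq_le measure_ge0 andbT -PK.
  by apply: le_measure; rewrite ?inE //; exact: measurableC.
have splitA : A = (A `&` K) `|` (A `&` ~` K) by rewrite -setIUr setUv setIT.
rewrite [X in (P X <= _)%E]splitA -[X in (_ <= X)%E]adde0 -nullAC.
by apply: measureU2 => //; exact: measurableI.
Qed.

Lemma le_indic_integral P A h c : prob_on K P -> measurable (A : set Rd) ->
  0 <= c -> (forall x, c * \1_A x <= h x) ->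
  ((c * fine (P A))%:E <= \int[P]_(x in K) (h x)%:E)%E.
Proof.
move=> PK mA c0 ch.
rewrite EFinM fineK_prob // -prob_on_setIK // -integralZ_indic //.
apply: ge0_le_integral_nonmeas => x _; rewrite lee_fin //.
by rewrite mulr_ge0 // indicE ler0n.
Qed.

Lemma integral_le_indic P A h c : measurable (A : set Rd) ->
  0 <= c -> (forall x, 0 <= h x <= c * \1_A x) ->
  (\int[P]_(x in K) (h x)%:E <= (c * fine (P A))%:E)%E.
Proof.
move=> mA c0 hc; apply: (@le_trans _ _ (\int[P]_(x in K) (c * \1_A x)%:E)%E).
  by apply: ge0_le_integral_nonmeas => x _; rewrite lee_fin; case/andP: (hc x).
rewrite integralZ_indic // EFinM fineK_prob //.
apply: lee_wpmul2l; first by rewrite lee_fin.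
by apply: le_measure; rewrite ?inE //; exact: measurableI.
Qed.

Lemma integral_sum_indic P p (F : V -> set V) (c : V -> R) : prob_on K P ->
  (forall a, measurable (F a : set Rd)) -> (forall a, 0 <= c a) ->
  (\int[P]_(x in K) (\sum_(a <- p) c a * \1_(F a) x)%:E
     = (\sum_(a <- p) c a * fine (P (F a)))%:E)%E.
Proof.
move=> PK mF c0; under eq_integral do rewrite -sumEFin.
rewrite ge0_integral_sum // => [|a|a x _]; last first.
- by rewrite lee_fin mulr_ge0 // indicE ler0n.
- by apply/measurable_EFinP; apply: measurable_funM => //; exact: measurable_indic.
rewrite -sumEFin; apply: eq_bigr => a _.
rewrite integralZ_indic // EFinM fineK_prob //; congr (_ * _)%E.
exact: prob_on_setIK.
Qed.

Lemma FM_ge_test mu nu h : FM_test K h ->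
  ((`|Rintegral mu K h - Rintegral nu K h|)%:E <= FM K mu nu)%E.
Proof. by move=> Th; apply: ereal_sup_ubound; exists h. Qed.

Lemma FMC mu nu : FM K mu nu = FM K nu mu.
Proof.
by rewrite /FM; congr ereal_sup; apply/seteqP; split => _ [f Tf <-]; exists f; rewrite // distrC.
Qed.

Lemma FM_sandwich P Q A B h c t : prob_on K P ->
  measurable (A : set Rd) -> measurable (B : set Rd) -> FM_test K h -> 0 < c ->
  (forall x, c * \1_A x <= h x <= c * \1_B x) ->
  (FM K P Q < (c * t)%:E)%E -> fine (P A) < fine (Q B) + t.
Proof.
move=> PK mA mB Th c0 hAB FMlt; have c_ge0 := ltW c0.
have h0 x : 0 <= h x.
  have [cA _] := andP (hAB x); apply: le_trans cA.
  by rewrite mulr_ge0 // indicE ler0n.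
have hle x : 0 <= h x <= c * \1_B x by rewrite h0; case/andP: (hAB x).
have hc x : 0 <= h x <= c * \1_setT x.
  rewrite h0 /= indicT mulr1; apply: le_trans (proj2 (andP (hle x))) _.
  by rewrite ler_piMr // indicE lern1 leq_b1.
have /andP[PA _] : c * fine (P A) <= Rintegral P K h <= c.
  apply: fine_between; first by apply: le_indic_integral => // x; case/andP: (hAB x).
  apply: le_trans (integral_le_indic P measurableT c_ge0 hc) _.
  by rewrite probability_setT mulr1.
have /andP[_ QB] : 0 <= Rintegral Q K h <= c * fine (Q B).
  apply: fine_between; first by apply: integral_ge0 => x _; rewrite lee_fin.
  exact: integral_le_indic.
have : `|Rintegral P K h - Rintegral Q K h| < c * t.
  by rewrite -lte_fin; exact: le_lt_trans (FM_ge_test P Q Th) FMlt.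
rewrite ltr_norml => /andP[_ diff].
by rewrite -(ltr_pM2l c0) mulrDr; lra.
Qed.

Definition tent (a : V) (s c : R) (y : V) : R := Num.min c (Num.max 0 (s - edist y a)).

Lemma tent_ge0 a s c y : 0 <= c -> 0 <= tent a s c y.
Proof. by move=> c0; rewrite /tent le_min c0 le_max lexx. Qed.

Lemma tent_le a s c y : tent a s c y <= c.
Proof. by rewrite /tent ge_min lexx. Qed.

Lemma FM_test_tent a s c : 0 <= c <= 1 -> FM_test K (tent a s c).
Proof.
move=> /andP[c0 c1]; split => [x _|x y _ _].
  by rewrite ger0_norm ?tent_ge0 //; exact: le_trans (tent_le _ _ _ _) c1.
apply: le_trans (_ : `|(s - edist x a) - (s - edist y a)| <= _).
  rewrite /tent !minEle !maxEle ler_norml.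
  set u := s - edist x a; set v := s - edist y a.
  have := ler_norm (u - v); have := ler_norm (v - u); rewrite distrC.
  by case: (leP 0 u) => ?; case: (leP 0 v) => ?; case: (leP c u) => ?;
    case: (leP c v) => ?; case: (leP c 0) => ?; lra.
have := edist_triangle x y a; have := edist_triangle y x a; rewrite (edistC y x).
by rewrite ler_norml; lra.
Qed.

Lemma tent_indic a s c A : 0 <= c -> (forall y, A y -> c + edist y a <= s) ->
  forall y, c * \1_A y <= tent a s c y <= c * \1_(eball a s) y.
Proof.
move=> c0 As y; rewrite !indicE; apply/andP; split.
  case: (boolP (y \in A)) => [/[1!inE] Ay|_]; last by rewrite mulr0 tent_ge0.
  by rewrite mulr1 /tent (minEle c) ifT // le_max; have := As y Ay; lra.
case: (boolP (y \in eball a s)) => [_|]; first by rewrite mulr1 tent_le.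
rewrite notin_setE /eball /= edistC => /negP; rewrite -leNgt => ys.
by rewrite mulr0 /tent ge_min ge_max lexx /= subr_le0 ys orbT.
Qed.

Lemma atom_mass_lt mu nu (a : V) rho t : prob_on K mu -> 0 < rho <= 1 ->
  (FM K mu nu < (rho * t)%:E)%E -> fine (mu [set a]) < fine (nu (eball a rho)) + t.
Proof.
move=> muK /andP[rho0 rho1].
have rho01 : 0 <= rho <= 1 by rewrite ltW.
apply: (FM_sandwich muK (measurable_set1_Rd a) (measurable_eball a rho)
  (FM_test_tent a rho rho01) rho0).
by apply: tent_indic (ltW rho0) _ => y ->; rewrite edistxx addr0.
Qed.

Lemma ball_mass_lt mu nu a s s' c t : prob_on K nu -> 0 < c <= 1 -> s' + c <= s ->
  (FM K mu nu < (c * t)%:E)%E -> fine (nu (eball a s')) < fine (mu (eball a s)) + t.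
Proof.
move=> nuK /andP[c0 c1] ss'; rewrite FMC.
have c01 : 0 <= c <= 1 by rewrite ltW.
apply: (FM_sandwich nuK (measurable_eball a s') (measurable_eball a s)
  (FM_test_tent a s c01) c0).
by apply: tent_indic (ltW c0) _ => y; rewrite /eball /= edistC; lra.
Qed.

Lemma Ient_le0 P s : (Ient K P s <= 0)%E.
Proof.
rewrite /Ient le0_integralE ?oppe_le0 => [|x _].
  by apply: integral_ge0 => x _; exact: funeneg_ge0.
by apply: elog_le0; [exact: measure_ge0 | exact: probability_le1 (measurable_eball _ _)].
Qed.

Lemma Ient_le_packing nu (r rho : R) p (q : V -> R) : prob_on K nu -> uniq p ->
  {in p &, forall a b x, eball a rho x -> eball b rho x -> a = b} ->
  (forall a, a \in p -> 0 < q a) ->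
  (forall a, a \in p -> (nu (eball a (r + rho)) <= (q a)%:E)%E) ->
  (Ient K nu r
     <= (\sum_(a <- p) Num.min 0 (ln (q a)) * fine (nu (eball a rho)))%:E)%E.
Proof.
move=> nuK up disj q0 nuq.
pose g x := elog (nu (eball x r)).
have g_le0 x : (g x <= 0)%E.
  by apply: elog_le0; [exact: measure_ge0 | exact: probability_le1 (measurable_eball _ _)].
pose c a := - Num.min 0 (ln (q a)).
have c0 a : 0 <= c a by rewrite /c oppr_ge0 ge_min lexx.
rewrite /Ient le0_integralE; last by move=> x _; exact: g_le0.
rewrite leeNl -EFinN -sumrN.
under eq_bigr do rewrite -mulNr.
rewrite -(integral_sum_indic (c := c) p nuK) // => [|a]; last exact: measurable_eball.
apply: ge0_le_integral_nonmeas => x _.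
  by rewrite lee_fin sumr_ge0 // => a _; rewrite mulr_ge0 // indicE ler0n.
have [[a pa ax]|no_ball] := pselect (exists2 a, a \in p & eball a rho x); last first.
  rewrite big1_seq ?funeneg_ge0 // => b /andP[_ pb].
  by rewrite indicE memNset ?mulr0 // => bx; apply: no_ball; exists b.
rewrite (sum_indic_disjoint _ up pa ax) => [|b pb bx]; last exact: disj bx ax.
have gq : (g x <= (ln (q a))%:E)%E.
  apply: elog_le_ln (q0 a pa) (measure_ge0 _ _) _; apply: le_trans (nuq a pa).
  apply: le_measure; rewrite ?inE; [exact: measurable_eball | exact: measurable_eball |].
  move=> y; rewrite /eball /= => xy; move: ax; rewrite /eball /= => ax.
  by have := edist_triangle a x y; lra.
rewrite funenegE /c oppr_min oppr0 EFin_max ge_max !le_max lexx orbT /=.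
by rewrite EFinN leeN2 gq.
Qed.

Lemma Ient_ge_atoms mu (s : R) p : prob_on K mu -> uniq p ->
  mu (~` [set` p]) = 0%E -> (forall a, a \in p -> (0 < mu (eball a s))%E) ->
  ((\sum_(a <- p) fine (mu [set a]) * ln (fine (mu (eball a s))))%:E
     <= Ient K mu s)%E.
Proof.
move=> muK up null_out ball_pos.
pose M a := fine (mu (eball a s)).
pose f x := elog (mu (eball x s)).
have f_le0 x : (f x <= 0)%E.
  by apply: elog_le0; [exact: measure_ge0 | exact: probability_le1 (measurable_eball _ _)].
pose c a := - ln (M a).
have c0 a : 0 <= c a.
  by rewrite /c oppr_ge0; apply: ln_le0; exact: fine_prob_le1 (measurable_eball _ _).
rewrite /Ient le0_integralE; last by move=> x _; exact: f_le0.
rewrite leeNr -EFinN -sumrN.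
under eq_bigr do rewrite -mulrN mulrC.
rewrite -(integral_sum_indic (c := c) p muK) // => [|a]; last exact: measurable_set1_Rd.
apply: ge0_le_integral_off_null (measurableC (measurable_set_seq p)) null_out _ _ _ _ => //.
- apply/measurable_EFinP; apply: measurable_sum => a.
  by apply: measurable_funM => //; apply: measurable_indic; exact: measurable_set1_Rd.
- by move=> x _; rewrite lee_fin sumr_ge0 // => a _; rewrite mulr_ge0 // indicE ler0n.
move=> x _ /contrapT px.
rewrite (sum_indic_disjoint _ up px) //.
have Mx : 0 < M x by rewrite -lte_fin fineK_prob ?ball_pos //; exact: measurable_eball.
rewrite funenegE /= -(fineK_prob mu (measurable_eball x s)) elog_EFin //.
by rewrite ge_max lee_fin lexx /= lee_fin c0.
Qed.

Lemma Ient_le_of_ball_masses mu nu (r rho e eps : R) p :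
  prob_on K mu -> prob_on K nu -> uniq p -> mu (~` [set` p]) = 0%E ->
  {in p &, forall a b x, eball a rho x -> eball b rho x -> a = b} ->
  (forall a, a \in p -> (0 < mu (eball a (2 * r)))%E) -> e <= 1 -> e <= eps ->
  (forall a, a \in p -> (1 - e) * fine (mu [set a]) <= fine (nu (eball a rho))) ->
  (forall a, a \in p ->
     (nu (eball a (r + rho)) <= (2 * fine (mu (eball a (2 * r))))%:E)%E) ->
  (Ient K nu r <= (ln 2 : R)%:E + (1 - eps)%:E * Ient K mu (2 * r))%E.
Proof.
move=> muK nuK up null_out disj ball_pos e1 e_eps mass_lb ball_ub.
pose M a := fine (mu (eball a (2 * r))).
have M01 a : a \in p -> 0 < M a <= 1.
  move=> pa; rewrite fine_prob_le1 ?andbT; last exact: measurable_eball.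
  by rewrite -lte_fin fineK_prob ?ball_pos //; exact: measurable_eball.
apply: le_trans (Ient_le_packing nuK up disj _ ball_ub) _.
  by move=> a /M01 /andP[Ma _]; rewrite mulr_gt0.
apply: le_trans (_ : ((ln 2 + (1 - e) *
    \sum_(a <- p) fine (mu [set a]) * ln (M a))%:E <= _)%E).
  rewrite lee_fin; apply: packing_entropy_bound M01 mass_lb _ _.
  - by move=> a _; exact: fine_prob_ge0.
  - exact: sum_disjoint_balls_le1.
rewrite EFinD leeD2l //.
apply: le_scale_nonpos (Ient_ge_atoms muK up null_out ball_pos) (Ient_le0 mu _).
- by rewrite subr_ge0.
- by rewrite lerD2l lerN2.
Qed.

End on_K.

Theorem corollary2p4 (R : realType) (d : nat) (K : set 'rV[R]_d)
  (eps r : R) (mu : probability (Rd R d) R) :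
  compact K -> 0 < eps -> 0 < r ->
  prob_on K mu -> finite_supp mu ->
  exists2 delta : R, 0 < delta &
    forall nu : probability (Rd R d) R, prob_on K nu ->
      (FM K mu nu < delta%:E)%E ->
      (Ient K nu r <= (ln 2 : R)%:E + (1 - eps)%:E * Ient K mu (2 * r))%E.
Proof.
move=> cK eps0 r0 muK supp_mu; have mK := compact_measurable_Rd cK.
have r2 : 0 < 2 * r by rewrite mulr_gt0.
have [p [up atom_pos null_out]] := finite_supp_atoms supp_mu.
pose m (a : 'rV[R]_d) := fine (mu [set a]).
have m_pos a : a \in p -> 0 < m a.
  by move=> pa; rewrite -lte_fin (fineK_prob mu (measurable_set1_Rd a)) atom_pos.
have [m0 m0_gt0 m0_le] := exists_pos_lb_seq m_pos.
have ub0 : 0 < Num.min 1 (r / 2) by rewrite lt_min ltr01 divr_gt0.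
have [rho /andP[rho0 rho_le] disj] := exists_separating_radius p ub0.
move: rho_le; rewrite le_min => /andP[rho1 rho_r].
have rho01 : 0 < rho <= 1 by rewrite rho0.
pose e := Num.min 1 eps; have e0 : 0 < e by rewrite lt_min ltr01.
have e1 : e <= 1 by rewrite ge_min lexx.
(* Below this bound, tests of height [rho] move each atom mass by less than
   [e * m0 <= e * m a]. *)
exists (rho * (e * m0)) => [|nu nuK FMlt]; first by rewrite !mulr_gt0.
apply: (Ient_le_of_ball_masses mK muK nuK up null_out disj _ e1) => [a pa||a pa|a pa].
- exact: lt_le_trans (atom_pos a pa) (measure_set1_le_eball _ _ r2).
- by rewrite ge_min lexx orbT.
- have := atom_mass_lt mK a muK rho01 FMlt; have := m0_le a pa; rewrite /m; nra.
- rewrite -fineK_prob ?lee_fin; last exact: measurable_eball.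
  have /(ball_mass_lt mK a nuK rho01)/(_ FMlt) : r + rho + rho <= 2 * r by lra.
  have := m0_le a pa; have := fine_set1_le_eball mu a r2.
  rewrite /m; nra.
Qed.
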